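(* Let $p$ be an odd prime. If $M$ is a locally finitely generated $A$-module and $x\in M$ satisfies $\Phi_nx=0$ for some $n\ge0$, then $A_nx=0$.
   Context: $A$ is the ring of degree zero stable operations in $p$-local complex $K$-theory. Fix $q$ primitive mod $p^2$, $\Psi^q\in A$ the Adams operation, $q_i=q^{(-1)^i\lfloor i/2\rfloor}$, $\Theta_n(X)=\prod_{i=1}^n(X-q_i)$, $\Phi_n=\Theta_n(\Psi^q)$; every element of $A$ is uniquely a convergent sum $\sum_{n\ge0}a_n\Phi_n$ with $a_n\in\mathbb{Z}_{(p)}$, and $A_m=\{\sum_{n\ge m}a_n\Phi_n\}$. An $A$-module $M$ is locally finitely generated if $Ax$ is finitely generated over $\mathbb{Z}_{(p)}$ for every $x\in M$. *)

From HB Require Import structures.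
From mathcomp Require Import all_boot all_order all_algebra.
Set Implicit Arguments. Unset Strict Implicit. Unset Printing Implicit Defensive.
Import Order.TTheory GRing.Theory Num.Theory.
Local Open Scope ring_scope.

Definition Zloc (p : nat) (r : rat) : bool := ~~ (p%:Z %| denq r)%Z.

Definition primitive_mod_p2 (p : nat) (q : int) : Prop :=
  coprimez q p%:Z /\
  forall k : nat, (0 < k)%N -> (k < p * p.-1)%N ->
    ~~ ((p ^ 2)%:Z %| q ^+ k - 1)%Z.

Definition qi (q : int) (i : nat) : rat :=
  (q%:~R : rat) ^ ((-1) ^+ i * (i./2)%:Z).

Definition Theta (q : int) (n : nat) : {poly rat} :=
  \prod_(1 <= i < n.+1) ('X - (qi q i)%:P).

(* Expansion coefficients: tcoef q i f k is the coefficient of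
   prod_{j=i+1}^{i+k} (X - q_j) in the expansion of f in that basis. *)
Fixpoint tcoef (q : int) (i : nat) (f : {poly rat}) (k : nat) : rat :=
  match k with
  | 0 => f.[qi q i.+1]
  | k'.+1 => tcoef q i.+1 (f %/ ('X - (qi q i.+1)%:P)) k'
  end.

(* Elements of A are represented by their coefficient sequences
   (a_n)_n, standing for sum_n a_n Phi_n; they are the sequences with
   values in Z_(p). *)
Definition Aseq := nat -> rat.

Definition inA (p : nat) (a : Aseq) : Prop := forall n, Zloc p (a n).

Definition PhiA (n : nat) : Aseq := fun k => (k == n)%:R.

Definition constA (c : rat) : Aseq := fun k => if k == 0%N then c else 0.

Definition addA (a b : Aseq) : Aseq := fun k => a k + b k.

(* Product: (sum a_n Phi_n)(sum b_m Phi_m) = sum_k c_k Phi_k where only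
   n, m <= k contribute to c_k. *)
Definition mulA (q : int) (a b : Aseq) : Aseq := fun k =>
  \sum_(n < k.+1) \sum_(m < k.+1)
     a n * b m * tcoef q 0 (Theta q n * Theta q m) k.

Definition inAfilt (p : nat) (m : nat) (a : Aseq) : Prop :=
  inA p a /\ forall k, (k < m)%N -> a k = 0.

Definition is_Amodule (p : nat) (q : int) (M : zmodType) (act : Aseq -> M -> M) : Prop :=
  [/\ forall a, inA p a -> forall x y, act a (x + y) = act a x + act a y,
      forall a b, inA p a -> inA p b -> forall x, act (addA a b) x = act a x + act b x,
      forall a b, inA p a -> inA p b -> forall x, act (mulA q a b) x = act a (act b x)
    & forall x, act (constA 1) x = x].

Definition locally_fg (p : nat) (M : zmodType) (act : Aseq -> M -> M) : Prop :=
  forall x : M, exists gens : seq M,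
    (forall g, g \in gens -> exists2 a, inA p a & g = act a x) /\
    (forall a, inA p a -> exists2 c : nat -> rat, (forall i, Zloc p (c i)) &
        act a x = \sum_(i < size gens) act (constA (c i)) (nth 0 gens i)).

From Pilot Require Import Defs.
From HB Require Import structures.
From mathcomp Require Import all_boot all_order all_algebra cyclic.
From mathcomp Require Import zify ring.
From Stdlib Require Import Classical FunctionalExtensionality.
Set Implicit Arguments. Unset Strict Implicit. Unset Printing Implicit Defensive.
Import Order.TTheory GRing.Theory Num.Theory.
Local Open Scope ring_scope.

(* With [lam = q_(n+1)] one has [Phi_(n+1) = Phi_n (Psi^q - lam)],
   so [y = (Psi^q - lam) x] satisfies [Phi_n y = 0] and is killed by [A_n].  Every
   [a] in [A_(n+1)] is divisible by [Psi^q - lam] up to an error in [p^j A], for every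
   [j]: the formal quotient involves products of the [q_l - lam] over consecutive [l],
   and any [2(p-1)] consecutive [q_l] include one congruent to [lam] modulo [p] by
   Fermat's little theorem.  Writing [a = c (Psi^q - lam) + p^j d] with [c] in [A_n]
   gives [a x = p^j (d x)], so [a x] lies in [p^j (A x)] for all [j]; since [A x] is a
   finitely generated [Z_(p)]-module, Krull's intersection theorem gives [a x = 0]. *)

Lemma fermat_int (p : nat) (z : int) :
  prime p -> coprimez z p -> (z ^+ p.-1 == 1 %[mod p])%Z.
Proof.
move=> p_pr z_cop; have p_neq0 : p%:Z != 0 by rewrite eqz_nat -lt0n prime_gt0.
have /gez0_abs zpE : 0 <= (z %% p)%Z by exact: modz_ge0.
have : coprimez (z %% p)%Z p by rewrite /coprimez gcdz_modl.
rewrite -modzXm -zpE coprimezE /= => /Euler_exp_totient.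
rewrite totient_prime // => fermat.
by rewrite -[X in (X ^+ _)%R]natz -natrX natz -[1%R]/(Posz 1) !modz_nat fermat.
Qed.

Lemma exists_congr_in_range (s0 d : nat) (e : int) : (0 < d)%N ->
  exists2 s, (s0 <= s < s0 + d)%N & (d%:Z %| s%:Z - e)%Z.
Proof.
move=> d_gt0; have d_neq0 : d%:Z != 0 by rewrite eqz_nat -lt0n.
have /gez0_abs rE : 0 <= ((e - s0%:Z) %% d)%Z by exact: modz_ge0.
exists (s0 + `|((e - s0%:Z) %% d)%Z|)%N.
  by rewrite leq_addr ltn_add2l -ltz_nat rE ltz_pmod.
rewrite PoszD rE; set r := ((e - s0%:Z) %% d)%Z.
have -> : s0%:Z + r - e = - ((e - s0%:Z) - r) by ring.
by rewrite {1}(divz_eq (e - s0%:Z) d) addrK rpredN dvdz_mull.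
Qed.

Lemma sum_delta (R : nzSemiRingType) (F : nat -> R) (k j : nat) :
  \sum_(n < k) F n * ((n : nat) == j)%:R = if (j < k)%N then F j else 0.
Proof.
elim: k => [|k IHk]; first by rewrite big_ord0.
rewrite big_ord_recr /= IHk ltnS.
by case: ltngtP => [_|_|->]; rewrite /= ?mulr1 ?mulr0 ?addr0 ?add0r.
Qed.

Section NewtonBasis.
Variable q : int.

Definition newton (i m : nat) : {poly rat} :=
  \prod_(i.+1 <= l < (i + m).+1) ('X - (qi q l)%:P).

Lemma newton0 i : newton i 0 = 1.
Proof. by rewrite /newton addn0 big_geq. Qed.

Lemma newtonS i m : newton i m.+1 = ('X - (qi q i.+1)%:P) * newton i.+1 m.
Proof. by rewrite /newton big_ltn ?addnS ?addSn // ltnS leq_addr. Qed.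

Lemma Theta_newton n : Theta q n = newton 0 n.
Proof. by rewrite /Theta /newton add0n. Qed.

Lemma tcoefD i f g k : tcoef q i (f + g) k = tcoef q i f k + tcoef q i g k.
Proof. by elim: k i f g => [|k IHk] i f g /=; rewrite ?hornerD // divpD IHk. Qed.

Lemma tcoefZ i c f k : tcoef q i (c *: f) k = c * tcoef q i f k.
Proof. by elim: k i f => [|k IHk] i f /=; rewrite ?hornerZ // divpZl IHk. Qed.

Lemma tcoef0 i k : tcoef q i 0 k = 0.
Proof. by rewrite -(scale0r 0) tcoefZ mul0r. Qed.

Lemma tcoef_newton i m k : tcoef q i (newton i m) k = (m == k)%:R.
Proof.
elim: k i m => [|k IHk] i [|m] /=.
- by rewrite newton0 hornerC.
- by rewrite newtonS hornerM hornerXsubC subrr mul0r.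
- by rewrite newton0 divp_small ?tcoef0 // size_poly1 size_XsubC.
- by rewrite newtonS mulKp ?polyXsubC_eq0 ?IHk.
Qed.

Lemma tcoef_Theta n k : tcoef q 0 (Theta q n) k = (n == k)%:R.
Proof. by rewrite Theta_newton tcoef_newton. Qed.

Lemma Theta0 : Theta q 0 = 1.
Proof. by rewrite Theta_newton newton0. Qed.

Lemma ThetaS n : Theta q n.+1 = Theta q n * ('X - (qi q n.+1)%:P).
Proof. exact: big_nat_recr. Qed.

Lemma Theta_mul1 n :
  Theta q n * Theta q 1 = Theta q n.+1 + (qi q n.+1 - qi q 1) *: Theta q n.
Proof. by rewrite !ThetaS Theta0 mul1r -mul_polyC polyCB; ring. Qed.

End NewtonBasis.

Section CoefficientSequences.
Arguments tcoef : simpl never.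
Variable q : int.

Lemma mulA_constAl c b : Defs.mulA q (constA c) b = (fun k => c * b k).
Proof.
apply: functional_extensionality => k.
rewrite /Defs.mulA big_ord_recl [X in _ + X]big1 ?addr0 => [|n _]; last first.
  by rewrite big1 // => m _; rewrite /constA /= !mul0r.
have := sum_delta (fun m => c * b m) k.+1 k; rewrite ltnSn => <-.
by apply: eq_bigr => m _; rewrite Theta0 mul1r tcoef_Theta.
Qed.

Lemma mulA_constA c c' : Defs.mulA q (constA c) (constA c') = constA (c * c').
Proof.
by rewrite mulA_constAl; apply: functional_extensionality => -[|k]; rewrite /constA ?mulr0.
Qed.

Lemma addA_constA c c' : Defs.addA (constA c) (constA c') = constA (c + c').
Proof. by apply: functional_extensionality => -[|k]; rewrite /Defs.addA /constA ?addr0. Qed.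

Lemma PhiA0 : PhiA 0 = constA 1.
Proof. by apply: functional_extensionality => -[|k]. Qed.

(* [PsiA lam] is [Psi^q - lam = Phi_1 + (q_1 - lam) Phi_0]. *)
Definition PsiA (lam : rat) : Aseq :=
  fun m => if m == 0%N then qi q 1 - lam else (m == 1%N)%:R.

Definition shiftA (a : Aseq) (lam : rat) : Aseq :=
  fun k => (if k is k'.+1 then a k' else 0) + (qi q k.+1 - lam) * a k.

Lemma mulA_PsiA a lam : Defs.mulA q a (PsiA lam) = shiftA a lam.
Proof.
apply: functional_extensionality => k.
have inner n : \sum_(m < k.+1) a n * PsiA lam m * tcoef q 0 (Theta q n * Theta q m) k
    = a n * (n.+1 == k)%:R + (a n * (qi q n.+1 - lam)) * (n == k)%:R.
  rewrite big_ord_recl Theta0 mulr1 tcoef_Theta /PsiA /=.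
  case: k => [|k].
    by rewrite big_ord0; case: n => [|n] /=; ring.
  rewrite big_ord_recl big1 => [|m _]; last by rewrite /= mulr0 mul0r.
  by rewrite /= Theta_mul1 tcoefD tcoefZ !tcoef_Theta; ring.
rewrite /Defs.mulA (eq_bigr _ (fun (n : 'I_k.+1) _ => inner n)) big_split /=.
rewrite (sum_delta (fun n => a n * (qi q n.+1 - lam))) ltnSn /shiftA [_ * (_ - lam)]mulrC.
clear inner; case: k => [|k]; first by rewrite big1 ?add0r // => n _; rewrite mulr0.
rewrite (eq_bigr (fun n : 'I_k.+2 => a n * ((n : nat) == k)%:R)) => [|n _]; last by rewrite eqSS.
by rewrite sum_delta ifT ?ltnS.
Qed.

Lemma PhiA_mulPsiA n : Defs.mulA q (PhiA n) (PsiA (qi q n.+1)) = PhiA n.+1.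
Proof.
rewrite mulA_PsiA; apply: functional_extensionality => -[|k]; rewrite /shiftA /PhiA /=.
  by case: n => [|n]; rewrite /= ?subrr ?mul0r ?mulr0 ?addr0.
rewrite eqSS; case: (eqVneq k n) => [->|_] /=.
  by rewrite gtn_eqF //= mulr0 addr0.
by case: eqP => [<-|_]; rewrite /= ?subrr ?mul0r ?mulr0 ?add0r.
Qed.

End CoefficientSequences.

Section LocalIntegers.
Variable p : nat.
Hypothesis p_prime : prime p.

Let ndvd_natr_neq0 (b : nat) : ~~ (p %| b)%N -> (b%:R : rat) != 0.
Proof. by rewrite pnatr_eq0; apply: contraNneq => ->; rewrite dvdn0. Qed.

Lemma ZlocP r :
  reflect (exists a : int, exists2 b : nat, ~~ (p %| b)%N & r = a%:~R / b%:R)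
          (Zloc p r).
Proof.
apply: (iffP idP) => [r_loc | [a [b b_ndvd ->]]].
  exists (numq r), `|denq r|%N; first by move: r_loc; rewrite /Zloc dvdzE.
  by rewrite -[in LHS](divq_num_den r) -[in LHS]absz_denq.
have -> : a%:~R / b%:R = fracq (a, b%:Z) :> rat by rewrite fracqE.
rewrite /Zloc den_fracq /= (_ : b%:Z != 0) ?dvdzE /=; last first.
  by rewrite eqz_nat; apply: contraNneq b_ndvd => ->; rewrite dvdn0.
apply: contra b_ndvd => /dvdn_trans; apply; apply: dvdn_div; exact: dvdn_gcdr.
Qed.

Fact Zloc_subring_closed : GRing.subring_closed (Zloc p).
Proof.
have p_ndvd1 : ~~ (p %| 1)%N by rewrite dvdn1 neq_ltn prime_gt1 ?orbT.
split; first by apply/ZlocP; exists 1, 1%N; rewrite ?divr1.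
  move=> _ _ /ZlocP[a [b b_ndvd ->]] /ZlocP[c [d d_ndvd ->]]; apply/ZlocP.
  exists (a * d%:Z - c * b%:Z), (b * d)%N; first by rewrite Euclid_dvdM // negb_or b_ndvd.
  rewrite natrM rmorphB !rmorphM /= !pmulrn; field.
  by rewrite !ndvd_natr_neq0.
move=> _ _ /ZlocP[a [b b_ndvd ->]] /ZlocP[c [d d_ndvd ->]]; apply/ZlocP.
exists (a * c), (b * d)%N; first by rewrite Euclid_dvdM // negb_or b_ndvd.
by rewrite natrM rmorphM /= invfM; ring.
Qed.

HB.instance Definition _ :=
  GRing.isSubringClosed.Build rat (Zloc p) Zloc_subring_closed.

Lemma inAE a : inA p a = forall k, a k \in Zloc p.
Proof. by []. Qed.

Lemma Zloc_invz (z : int) : ~~ (p %| z)%Z -> z%:~R^-1 \in Zloc p.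
Proof.
move=> z_ndvd; have z_neq0 : z != 0 by apply: contraNneq z_ndvd => ->; rewrite dvdz0.
by rewrite unfold_in /Zloc denqVz // dvdzE.
Qed.

Lemma Zloc_divp (z : int) : (p %| z)%Z -> z%:~R / p%:R \in Zloc p.
Proof.
move=> /dvdzP[k ->]; rewrite intrM mulfK ?rpred_int //.
by rewrite intr_eq0 eqz_nat -lt0n prime_gt0.
Qed.

Lemma Zloc_invp : (p%:R)^-1 \notin Zloc p.
Proof.
rewrite pmulrn unfold_in /Zloc negbK denqVz ?dvdzE //.
by rewrite eqz_nat -lt0n prime_gt0.
Qed.

Lemma Zloc_pfactor t : t \in Zloc p -> t != 0 ->
  exists e w, [/\ w \in Zloc p, w^-1 \in Zloc p & t = p%:R ^+ e * w].
Proof.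
move=> /ZlocP[a [b b_ndvd ->]] t_neq0.
have a_neq0 : a != 0 by apply: contraNneq t_neq0 => ->; rewrite mul0r.
have [m m_cop aE] := pfactor_coprime p_prime (etrans (absz_gt0 a) a_neq0).
set e := logn p `|a| in aE *.
have z_ndvd : ~~ (p %| sgz a * m%:Z)%Z.
  rewrite dvdzE abszM (_ : `|sgz a|%N = 1%N) ?mul1n -?prime_coprime //.
  by move: a_neq0; case: sgzP.
exists e, ((sgz a * m%:Z)%:~R / b%:R); split.
- by rewrite rpredM ?rpred_int // pmulrn Zloc_invz // dvdzE.
- by rewrite invfM invrK rpredM ?rpred_nat ?Zloc_invz.
- have pe : ((p ^ e)%N%:~R : rat) = p%:R ^+ e by rewrite -natrX.
  by rewrite {1}[a]intEsg aE PoszM !intrM pe; ring.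
Qed.

Lemma Zloc_pdivisible_eq0 t : t \in Zloc p ->
  (forall j, exists2 c, c \in Zloc p & t = p%:R ^+ j * c) -> t = 0.
Proof.
move=> t_loc t_div; apply: contraTeq Zloc_invp => t_neq0; apply/negPn.
have [e [w [_ w_inv_loc tE]]] := Zloc_pfactor t_loc t_neq0.
have [c c_loc t_pc] := t_div e.+1.
have pe_neq0 : (p%:R : rat) ^+ e != 0 by rewrite expf_neq0 // pnatr_eq0 -lt0n prime_gt0.
have wE : w = p%:R * c by apply: (mulfI pe_neq0); rewrite -tE t_pc exprS; ring.
have w_neq0 : w != 0 by apply: contraNneq t_neq0 => w0; rewrite tE w0 mulr0.
have c_neq0 : c != 0 by apply: contraNneq w_neq0; rewrite wE => ->; rewrite mulr0.
suff -> : (p%:R : rat)^-1 = c * w^-1 by rewrite rpredM.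
by rewrite wE invfM mulrCA divff // mulr1.
Qed.

Lemma Zloc_pexp j : (p%:R : rat) ^+ j \in Zloc p.
Proof. by rewrite rpredX ?rpred_nat. Qed.

Section KrullIntersection.
Variables (M : zmodType) (s : rat -> M -> M).
Hypothesis scaleDr : forall c, c \in Zloc p -> {morph s c : x y / x + y}.
Hypothesis scaleDl : forall c c' x, c \in Zloc p -> c' \in Zloc p ->
  s (c + c') x = s c x + s c' x.
Hypothesis scaleA : forall c c' x, c \in Zloc p -> c' \in Zloc p ->
  s c (s c' x) = s (c * c') x.

Lemma scale0 x : s 0 x = 0.
Proof.
by apply: (@addrI _ (s 0 x)); rewrite addr0 -scaleDl ?rpred0 ?addr0.
Qed.

Lemma scaler0 c : c \in Zloc p -> s c 0 = 0.
Proof. by move=> c_loc; apply: (@addrI _ (s c 0)); rewrite -scaleDr // !addr0. Qed.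

Lemma scaleB c c' x : c \in Zloc p -> c' \in Zloc p -> s (c - c') x = s c x - s c' x.
Proof.
by move=> c_loc c'_loc; apply/eqP; rewrite eq_sym subr_eq -scaleDl ?rpredB ?subrK.
Qed.

Lemma scale_sum c r (F : 'I_r -> M) : c \in Zloc p ->
  s c (\sum_(i < r) F i) = \sum_(i < r) s c (F i).
Proof. by move=> c_loc; apply: (big_morph (s c) (scaleDr c_loc) (scaler0 c_loc)). Qed.

Definition zspan r (g : nat -> M) (z : M) : Prop :=
  exists2 u : nat -> rat, (forall i, u i \in Zloc p) & z = \sum_(i < r) s (u i) (g i).

Definition pzspan j r (g : nat -> M) (y : M) : Prop :=
  exists2 z, zspan r g z & y = s (p%:R ^+ j) z.

Lemma zspan0 g z : zspan 0 g z -> z = 0.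
Proof. by case=> u _ ->; rewrite big_ord0. Qed.

Lemma zspanD r g z z' : zspan r g z -> zspan r g z' -> zspan r g (z + z').
Proof.
move=> [u u_loc ->] [u' u'_loc ->]; exists (fun i => u i + u' i) => [i|].
  exact: rpredD.
by rewrite -big_split; apply: eq_bigr => i _; rewrite scaleDl.
Qed.

Lemma zspanB r g z z' : zspan r g z -> zspan r g z' -> zspan r g (z - z').
Proof.
move=> [u u_loc ->] [u' u'_loc ->]; exists (fun i => u i - u' i) => [i|].
  exact: rpredB.
by rewrite -sumrB; apply: eq_bigr => i _; rewrite scaleB.
Qed.

Lemma zspanZ r g c z : c \in Zloc p -> zspan r g z -> zspan r g (s c z).
Proof.
move=> c_loc [u u_loc ->]; exists (fun i => c * u i) => [i|].
  exact: rpredM.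
by rewrite scale_sum //; apply: eq_bigr => i _; rewrite scaleA.
Qed.

Lemma zspanS r g z : zspan r.+1 g z ->
  exists2 u, u \in Zloc p & exists2 z', zspan r (fun i => g i.+1) z' & z = s u (g 0%N) + z'.
Proof.
case=> u u_loc ->; exists (u 0%N) => //.
by exists (\sum_(i < r) s (u i.+1) (g i.+1)); [exists (fun i => u i.+1) | rewrite big_ord_recl].
Qed.

Lemma pzspan_tail_dependent r g y t :
  t \in Zloc p -> t != 0 -> zspan r (fun i => g i.+1) (s t (g 0%N)) ->
  (forall j, pzspan j r.+1 g y) -> forall j, pzspan j r (fun i => g i.+1) y.
Proof.
move=> t_loc t_neq0 t_dep y_div j.
have [e [w [_ w_inv_loc tE]]] := Zloc_pfactor t_loc t_neq0.
have w_neq0 : w != 0 by apply: contraNneq t_neq0 => w0; rewrite tE w0 mulr0.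
have pe_dep : zspan r (fun i => g i.+1) (s (p%:R ^+ e) (g 0%N)).
  by rewrite -[p%:R ^+ e](mulfK w_neq0) -tE mulrC -scaleA //; apply: zspanZ.
have [z z_span ->] := y_div (j + e)%N.
have [u u_loc [z' z'_span ->]] := zspanS z_span.
exists (s (p%:R ^+ e) (s u (g 0%N) + z')); last by rewrite scaleA ?Zloc_pexp ?exprD.
rewrite scaleDr ?Zloc_pexp //; apply: zspanD; last exact: zspanZ (Zloc_pexp _) _.
by rewrite scaleA ?Zloc_pexp // mulrC -scaleA ?Zloc_pexp //; apply: zspanZ.
Qed.

Lemma pzspan_tail_free r g y :
  (forall t, t \in Zloc p -> zspan r (fun i => g i.+1) (s t (g 0%N)) -> t = 0) ->
  (forall j, pzspan j r.+1 g y) -> forall j, pzspan j r (fun i => g i.+1) y.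
Proof.
move=> g0_free y_div.
have y_split j : exists u z', [/\ u \in Zloc p, zspan r (fun i => g i.+1) z'
    & y = s (p%:R ^+ j * u) (g 0%N) + s (p%:R ^+ j) z'].
  have [z z_span ->] := y_div j; have [u u_loc [z' z'_span ->]] := zspanS z_span.
  by exists u, z'; rewrite scaleDr ?scaleA ?Zloc_pexp.
have [u0 [z0 [u0_loc z0_span]]] := y_split 0%N; rewrite expr0 mul1r => y0.
have u0E j u z' : u \in Zloc p -> zspan r (fun i => g i.+1) z' ->
    y = s (p%:R ^+ j * u) (g 0%N) + s (p%:R ^+ j) z' -> p%:R ^+ j * u = u0.
  move=> u_loc z'_span yE; apply/eqP; rewrite -subr_eq0; apply/eqP.
  apply: g0_free; first by rewrite rpredB ?rpredM ?Zloc_pexp.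
  have -> : s (p%:R ^+ j * u - u0) (g 0%N) = s 1 z0 - s (p%:R ^+ j) z'.
    apply/eqP; rewrite scaleB ?rpredM ?Zloc_pexp // subr_eq addrAC.
    by rewrite (addrC (s 1 z0)) -y0 yE addrK.
  by apply: zspanB; apply: zspanZ; rewrite ?rpred1 ?Zloc_pexp.
have u0_eq0 : u0 = 0.
  apply: Zloc_pdivisible_eq0 => // j; have [u [z' [u_loc z'_span yE]]] := y_split j.
  by exists u; rewrite // (u0E j u z').
move=> j; have [u [z' [u_loc z'_span yE]]] := y_split j.
by exists z'; rewrite // yE (u0E j u z') // u0_eq0 scale0 add0r.
Qed.

(* If a nonzero multiple of [g_0] lies in the span of the other generators, then so
   does [p^e g_0] for some [e], and [g_0] can be dropped at the cost of shifting [j];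
   otherwise the [g_0]-coordinate of [y] is unique, hence divisible by every [p^j]. *)
Theorem Krull_intersection r g y : (forall j, pzspan j r g y) -> y = 0.
Proof.
elim: r g => [|r IHr] g y_div.
  by have [z /zspan0 -> ->] := y_div 0%N; rewrite scaler0 ?Zloc_pexp.
apply: (IHr (fun i => g i.+1)).
have [[t [t_loc t_neq0 t_dep]] | g0_free] := classic
  (exists t, [/\ t \in Zloc p, t != 0 & zspan r (fun i => g i.+1) (s t (g 0%N))]).
  exact: pzspan_tail_dependent t_dep y_div.
apply: pzspan_tail_free y_div => t t_loc t_dep.
by apply: NNPP => /eqP t_neq0; apply: g0_free; exists t.
Qed.

End KrullIntersection.

Section CoprimeBase.
Variable q : int.
Hypothesis q_coprime : coprimez q p.

Let q_ndvd (k : nat) : ~~ (p %| q ^+ k)%Z.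
Proof.
have : coprimez (q ^+ k) p by exact: coprimezXl.
by rewrite coprimezE /= coprime_sym prime_coprime // dvdzE.
Qed.

Let q_neq0 : (q%:~R : rat) != 0.
Proof. by rewrite intr_eq0; apply: contraNneq (q_ndvd 1) => ->; rewrite dvdz0. Qed.

Lemma Zloc_qpow (e : int) : (q%:~R : rat) ^ e \in Zloc p.
Proof.
case: e => n; first by rewrite -exprnP rpredX ?rpred_int.
by rewrite NegzE -exprnN -rmorphXn Zloc_invz.
Qed.

Lemma dvdz_qpow_sub1 n : (p.-1 %| n)%N -> (p %| q ^+ n - 1)%Z.
Proof.
move=> /dvdnP[m ->]; rewrite mulnC exprM -eqz_mod_dvd -modzXm.
by rewrite (eqP (fermat_int p_prime q_coprime)) modzXm expr1n.
Qed.

Lemma Zloc_qpow_congr (e e' : int) : (p.-1%:Z %| e - e')%Z ->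
  ((q%:~R : rat) ^ e - q%:~R ^ e') / p%:R \in Zloc p.
Proof.
wlog le_e'e : e e' / e' <= e => [wlog_le | dvd_e].
  case: (lerP e' e) => [/wlog_le//|/ltW le_ee' dvd_e].
  by rewrite -opprB mulNr rpredN wlog_le // -opprB rpredN.
have /gez0_abs nE : 0 <= e - e' by rewrite subr_ge0.
set n := `|e - e'|%N in nE.
rewrite -(subrK e' e) -nE expfzDr // -{2}[q%:~R ^ e']mul1r -mulrBl mulrAC -exprnP.
have -> : (q%:~R : rat) ^+ n - 1 = (q ^+ n - 1)%:~R by rewrite rmorphB rmorphXn.
by rewrite rpredM ?Zloc_qpow ?Zloc_divp ?dvdz_qpow_sub1.
Qed.

Lemma Zloc_qi l : qi q l \in Zloc p.
Proof. exact: Zloc_qpow. Qed.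

Lemma qi_double s : qi q s.*2 = (q%:~R : rat) ^ s.
Proof. by rewrite /qi -signr_odd odd_double expr0 mul1r doubleK. Qed.

Definition qprod (lam : rat) (k L : nat) : rat :=
  \prod_(k.+1 <= l < (k + L).+1) (qi q l - lam).

Lemma qprodD lam k L L' :
  qprod lam k (L + L') = qprod lam k L * qprod lam (k + L) L'.
Proof. by rewrite /qprod addnA -big_cat_nat // ltnS ?leq_addr // leq_add2l leq_addr. Qed.

(* The even indices [l = 2s] of the window give [q_l = q^s] for [p - 1] consecutive
   [s], one of which is congruent to [e] modulo [p - 1]. *)
Lemma qprod_window (e : int) k : qprod (q%:~R ^ e) k (2 * p.-1) / p%:R \in Zloc p.
Proof.
have p1_gt0 : (0 < p.-1)%N by rewrite -ltnS prednK ?prime_gt1 ?prime_gt0.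
have [s /andP[ge_s lt_s] dvd_s] := exists_congr_in_range k./2.+1 e p1_gt0.
have k_half := odd_double_half k.
have odd_k_le1 := leq_b1 (odd k).
rewrite /qprod (big_cat_nat _ (n := s.*2)) ?(big_ltn (m := s.*2)) /=; try lia.
rewrite mulrCA mulrAC rpredM ?qi_double ?Zloc_qpow_congr //.
by rewrite rpredM // rpred_prod // => l _; rewrite rpredB ?Zloc_qi ?Zloc_qpow.
Qed.

Lemma qprod_pexp (e : int) k j :
  qprod (q%:~R ^ e) k (2 * p.-1 * j) / p%:R ^+ j \in Zloc p.
Proof.
elim: j k => [|j IHj] k; first by rewrite muln0 /qprod addn0 big_geq ?divr1 ?rpred1.
rewrite mulnS qprodD exprS invfM mulrACA rpredM ?qprod_window //.
Qed.

Section QuotientByPsi.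
Variables (b : Aseq) (lam : rat).

(* [quotPsi L k = \sum_(i < L) (-1)^i b_(k+i) prod_(k < l <= k+i) (q_l - lam)]:
   the truncation to [L] terms of the coefficient of index [k - 1] in the formal
   quotient of [b] by [Psi^q - lam]. *)
Fixpoint quotPsi (L k : nat) : rat :=
  if L is L'.+1 then b k - (qi q k.+1 - lam) * quotPsi L' k.+1 else 0.

Lemma quotPsiS_sub L k :
  quotPsi L.+1 k - quotPsi L k = (-1) ^+ L * b (k + L)%N * qprod lam k L.
Proof.
elim: L k => [|L IHL] k; first by rewrite /qprod !addn0 big_geq //=; ring.
have -> : qprod lam k L.+1 = (qi q k.+1 - lam) * qprod lam k.+1 L.
  by rewrite -add1n qprodD /qprod addn1 big_nat1 addnC.
have -> : quotPsi L.+2 k - quotPsi L.+1 k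
    = - (qi q k.+1 - lam) * (quotPsi L.+1 k.+1 - quotPsi L k.+1) by rewrite /=; ring.
by rewrite IHL -[in RHS]addSnnS exprS; ring.
Qed.

Lemma Zloc_quotPsi L k : inA p b -> lam \in Zloc p -> quotPsi L k \in Zloc p.
Proof.
move=> b_in lam_loc; elim: L k => [|L IHL] k /=; first exact: rpred0.
by rewrite rpredB ?rpredM ?rpredB ?Zloc_qi ?IHL //; apply: b_in.
Qed.

Lemma quotPsi_eq0 n L k : lam = qi q n -> (forall m, (m < n)%N -> b m = 0) ->
  (k < n)%N -> quotPsi L k = 0.
Proof.
move=> lamE b_low; elim: L k => [|L IHL] k k_lt_n //=.
rewrite b_low // sub0r; have [k1_lt_n|] := ltnP k.+1 n; first by rewrite IHL ?mulr0 ?oppr0.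
move=> n_le; have nE : k.+1 = n by apply/eqP; rewrite eqn_leq k_lt_n n_le.
by rewrite lamE nE subrr mul0r oppr0.
Qed.

End QuotientByPsi.

(* Division by [Psi^q - q_(n+1)] with remainder in [p^j A]: the remainder of the
   [L]-term truncation has the factor [prod (q_l - q_(n+1))] over [L = 2(p-1)j]
   consecutive indices, which is divisible by [p^j]. *)
Lemma filtS_decomp n j a : inAfilt p n.+1 a ->
  exists c d, [/\ inAfilt p n c, inA p d &
    a = Defs.addA (Defs.mulA q c (PsiA q (qi q n.+1)))
                  (Defs.mulA q (constA (p%:R ^+ j)) d)].
Proof.
move=> [a_in a_low]; set lam := qi q n.+1; set L := (2 * p.-1 * j)%N.
exists (fun k => quotPsi a lam L k.+1).
exists (fun k => (-1) ^+ L * a (k + L)%N * (qprod lam k L / p%:R ^+ j)); split.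
- by split=> [k|k k_lt_n]; [apply: Zloc_quotPsi; rewrite ?Zloc_qi | exact: quotPsi_eq0].
- rewrite inAE => k; rewrite rpredM ?qprod_pexp // rpredM ?rpredX ?rpredN ?rpred1 //; exact: a_in.
apply: functional_extensionality => k.
have pj_neq0 : (p%:R : rat) ^+ j != 0 by rewrite expf_neq0 // pnatr_eq0 -lt0n prime_gt0.
rewrite /Defs.addA mulA_PsiA mulA_constAl /shiftA mulrCA [p%:R ^+ j * _]mulrC divfK //.
rewrite -quotPsiS_sub.
case: k => [|k]; last by rewrite /=; ring.
by rewrite /= (@quotPsi_eq0 a lam n.+1 L 0) //; ring.
Qed.

Section Modules.
Variables (M : zmodType) (act : Aseq -> M -> M).
Hypothesis act_module : is_Amodule p q act.

Lemma inA_constA c : c \in Zloc p -> inA p (constA c).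
Proof. by rewrite inAE => c_loc [|k]; rewrite /constA ?rpred0. Qed.

Lemma inA_PhiA n : inA p (PhiA n).
Proof. by rewrite inAE => k; rewrite rpred_nat. Qed.

Lemma inA_PsiA lam : lam \in Zloc p -> inA p (PsiA q lam).
Proof. by rewrite inAE => lam_loc [|k]; rewrite /PsiA /= ?rpredB ?Zloc_qi ?rpred_nat. Qed.

Lemma inA_mulA_constA c a : c \in Zloc p -> inA p a ->
  inA p (Defs.mulA q (constA c) a).
Proof. by rewrite mulA_constAl !inAE => c_loc a_in k; rewrite rpredM. Qed.

Lemma inA_mulA_PsiA a lam : inA p a -> lam \in Zloc p ->
  inA p (Defs.mulA q a (PsiA q lam)).
Proof.
rewrite mulA_PsiA !inAE => a_in lam_loc [|k] /=;
  by rewrite rpredD ?rpredM ?rpredB ?Zloc_qi ?rpred0.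
Qed.

Lemma act0 a : inA p a -> act a 0 = 0.
Proof.
case: act_module => actDr _ _ _ a_in.
by apply: (@addrI _ (act a 0)); rewrite -actDr // !addr0.
Qed.

Lemma act_constADr c : c \in Zloc p -> {morph act (constA c) : x y / x + y}.
Proof. by case: act_module => actDr _ _ _ c_loc; apply: actDr; exact: inA_constA. Qed.

Lemma act_constADl c c' x : c \in Zloc p -> c' \in Zloc p ->
  act (constA (c + c')) x = act (constA c) x + act (constA c') x.
Proof.
case: act_module => _ actDl _ _ c_loc c'_loc.
by rewrite -addA_constA actDl //; exact: inA_constA.
Qed.

Lemma act_constAA c c' x : c \in Zloc p -> c' \in Zloc p ->
  act (constA c) (act (constA c') x) = act (constA (c * c')) x.
Proof.
case: act_module => _ _ actM _ c_loc c'_loc.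
by rewrite -(mulA_constA q) actM //; exact: inA_constA.
Qed.

Hypothesis act_lfg : locally_fg p act.

Theorem filt_annihilated n x : act (PhiA n) x = 0 ->
  forall a, inAfilt p n a -> act a x = 0.
Proof.
have [_ actDl actM act1] := act_module.
elim: n x => [|n IHn] x Phi_x a a_filt.
  by move: Phi_x; rewrite PhiA0 act1 => ->; rewrite act0 //; case: a_filt.
have Psi_in : inA p (PsiA q (qi q n.+1)) by apply: inA_PsiA; exact: Zloc_qi.
have Psi_x : act (PhiA n) (act (PsiA q (qi q n.+1)) x) = 0.
  by rewrite -actM ?PhiA_mulPsiA //; exact: inA_PhiA.
have [gens [_ gens_span]] := act_lfg x.
apply: (Krull_intersection act_constADr act_constADl act_constAA
         (r := size gens) (g := nth 0 gens)) => j.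
have [c [d [c_filt d_in ->]]] := filtS_decomp j a_filt.
have c_in : inA p c by case: c_filt.
have pj_loc := Zloc_pexp j.
rewrite actDl; last 2 first.
- by apply: inA_mulA_PsiA => //; exact: Zloc_qi.
- exact: inA_mulA_constA.
rewrite !actM //; last exact: inA_constA.
rewrite (IHn _ Psi_x c c_filt) add0r.
by exists (act d x); first exact: gens_span.
Qed.

End Modules.

End CoprimeBase.

End LocalIntegers.

Theorem corollary3p4 (p : nat) (q : int) (M : zmodType) (act : Aseq -> M -> M)
  (hp : prime p) (hodd : odd p) (hq : primitive_mod_p2 p q)
  (hM : is_Amodule p q act) (hlfg : locally_fg p act)
  (x : M) (n : nat) (hx : act (PhiA n) x = 0) :
  forall a, inAfilt p n a -> act a x = 0.
Proof. by case: hq => q_coprime _; exact: (filt_annihilated hp q_coprime hM hlfg hx). Qed.
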